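(* Fix $\underline\mu=\{\mu_{lk}\in\mathbb C^\tau\}$ and let $A_{lk}=\sum_{(i,j)}\alpha_{ij}\beta_{ilk}\mu_{ij}\mu_{ij}^H$. For each user $(l,k)$ and $s\in[1:\tau]$ let $c^{(s)}_{lk}=\alpha_{lk}\beta_{llk}\Re\{\mu_{lk}^H\varphi_s\}$, $b^{(s)}_{lk}=\varphi_s^HA_{lk}\varphi_s$, let $p^{(s)}_{lk}$ be a maximizer of $p\mapsto 2\sqrt p\,c^{(s)}_{lk}-p\,b^{(s)}_{lk}$ over $p\in[0,P_{\max}]$, and let $\pi^{(s)}_{lk}=2\sqrt{p^{(s)}_{lk}}\,c^{(s)}_{lk}-p^{(s)}_{lk}b^{(s)}_{lk}$. Then $$f(\underline p,\underline\psi,\underline\mu)=\sum_{(l,k)}\big(2\sqrt{p_{lk}}\,\alpha_{lk}\beta_{llk}\Re\{\mu_{lk}^H\psi_{lk}\}-p_{lk}\psi_{lk}^HA_{lk}\psi_{lk}\big)-\sigma^2\sum_{(l,k)}\alpha_{lk}\|\mu_{lk}\|^2,$$ and the maximum of $f(\cdot,\cdot,\underline\mu)$ over the feasible set $\mathcal F$ equals $\Pi^\star-\sigma^2\sum_{(l,k)}\alpha_{lk}\|\mu_{lk}\|^2$, where $\Pi^\star$ is the optimal value of the assignment problem: maximize $\sum_{(l,k,s)}\pi^{(s)}_{lk}x^{(s)}_{lk}$ over $x^{(s)}_{lk}\in\{0,1\}$ subject to $\sum_{s=1}^\tau x^{(s)}_{lk}=1$ for each $(l,k)$ and $\sum_{k=1}^K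 x^{(s)}_{lk}\le1$ for each $(l,s)$. Moreover, for any optimal $x$, setting $p_{lk}=\sum_sx^{(s)}_{lk}p^{(s)}_{lk}$ and $\psi_{lk}=\sum_sx^{(s)}_{lk}\varphi_s$ gives a maximizer of $f(\cdot,\cdot,\underline\mu)$ over $\mathcal F$.
   Context: $L$ cells indexed by $l,i$, each with $K$ users indexed by $k,j$, with $K\le\tau$; sums over $(i,j)$ or $(l,k)$ range over all $LK$ users. Noise variance $\sigma^2>0$, power budget $P_{\max}>0$, large-scale fading $\beta_{lij}>0$, weights $\alpha_{lk}>0$. $\{\varphi_1,\dots,\varphi_\tau\}\subset\mathbb C^\tau$ satisfy $\varphi_s^H\varphi_t=\tau$ if $s=t$ and $0$ otherwise. Orthogonal pilot design variables: powers $p_{lk}$ and normalized pilots $\psi_{lk}$; the feasible set $\mathcal F$ consists of all $(\underline p,\underline\psi)$ with $0\le p_{lk}\le P_{\max}$, $\psi_{lk}\in\{\varphi_1,\dots,\varphi_\tau\}$, and $\psi_{lk}\neq\psi_{lk'}$ for $k\neq k'$ (same cell). $D_l=\sigma^2I_\tau+\sum_{(i,j)}\beta_{lij}p_{ij}\psi_{ij}\psi_{ij}^H$, and $f(\underline p,\underline\psi,\underline\mu)=\sum_{(l,k)}\alpha_{lk}\big(2\beta_{llk}\sqrt{p_{lk}}\Re\{\mu_{lk}^H\psi_{lk}\}-\mu_{lk}^HD_l\mu_{lk}\big)$. *)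

(* The complex field is modelled by an arbitrary
   numClosedFieldType C (e.g. algC); real quantities are elements of C that
   are real (forced by the order hypotheses). *)
From HB Require Import structures.
From mathcomp Require Import all_boot all_order all_algebra.
Set Implicit Arguments. Unset Strict Implicit. Unset Printing Implicit Defensive.
Import Order.TTheory GRing.Theory Num.Theory Num.Def.
Local Open Scope ring_scope.

Section PilotDefs.
Variables (C : numClosedFieldType) (L K tau : nat).

Definition dotH (u v : 'cV[C]_tau) : C := \sum_(i < tau) (u i 0)^* * v i 0.

Definition adjv (u : 'cV[C]_tau) : 'rV[C]_tau := (map_mx Num.conj u)^T.

Definition Dmat (sigma2 : C) (beta : 'I_L -> 'I_L -> 'I_K -> C)
  (p : 'I_L -> 'I_K -> C) (psi : 'I_L -> 'I_K -> 'cV[C]_tau) (l : 'I_L)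
  : 'M[C]_tau :=
  sigma2%:M + \sum_(i < L) \sum_(j < K)
                 (beta l i j * p i j) *: (psi i j *m adjv (psi i j)).

Definition fobj (sigma2 : C) (alpha : 'I_L -> 'I_K -> C)
  (beta : 'I_L -> 'I_L -> 'I_K -> C)
  (p : 'I_L -> 'I_K -> C) (psi mu : 'I_L -> 'I_K -> 'cV[C]_tau) : C :=
  \sum_(l < L) \sum_(k < K)
    alpha l k * (2 * beta l l k * sqrtC (p l k) * 'Re (dotH (mu l k) (psi l k))
                 - dotH (mu l k) (Dmat sigma2 beta p psi l *m mu l k)).

Definition feasible (Pmax : C) (phi : 'I_tau -> 'cV[C]_tau)
  (p : 'I_L -> 'I_K -> C) (psi : 'I_L -> 'I_K -> 'cV[C]_tau) : Prop :=
  (forall l k, 0 <= p l k <= Pmax) /\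
  (forall l k, exists s, psi l k = phi s) /\
  (forall l k k', k != k' -> psi l k <> psi l k').

Definition Amat (alpha : 'I_L -> 'I_K -> C) (beta : 'I_L -> 'I_L -> 'I_K -> C)
  (mu : 'I_L -> 'I_K -> 'cV[C]_tau) (l : 'I_L) (k : 'I_K) : 'M[C]_tau :=
  \sum_(i < L) \sum_(j < K) (alpha i j * beta i l k) *: (mu i j *m adjv (mu i j)).

Definition cco (alpha : 'I_L -> 'I_K -> C) (beta : 'I_L -> 'I_L -> 'I_K -> C)
  (mu : 'I_L -> 'I_K -> 'cV[C]_tau) (phi : 'I_tau -> 'cV[C]_tau)
  (s : 'I_tau) (l : 'I_L) (k : 'I_K) : C :=
  alpha l k * beta l l k * 'Re (dotH (mu l k) (phi s)).

Definition bco (alpha : 'I_L -> 'I_K -> C) (beta : 'I_L -> 'I_L -> 'I_K -> C)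
  (mu : 'I_L -> 'I_K -> 'cV[C]_tau) (phi : 'I_tau -> 'cV[C]_tau)
  (s : 'I_tau) (l : 'I_L) (k : 'I_K) : C :=
  dotH (phi s) (Amat alpha beta mu l k *m phi s).

Definition gfun (c b q : C) : C := 2 * sqrtC q * c - q * b.

Definition assign_feasible (x : 'I_tau -> 'I_L -> 'I_K -> bool) : Prop :=
  (forall l k, (\sum_(s < tau) x s l k = 1)%N) /\
  (forall l s, (\sum_(k < K) x s l k <= 1)%N).

Definition assign_obj (piv : 'I_tau -> 'I_L -> 'I_K -> C)
  (x : 'I_tau -> 'I_L -> 'I_K -> bool) : C :=
  \sum_(l < L) \sum_(k < K) \sum_(s < tau) piv s l k * (x s l k)%:R.

End PilotDefs.

(* The proof has three parts.
   1. Expanding the Hermitian quadratic form mu^H D_l mu and exchanging the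
      order of summation moves the interference terms from the receiver side
      (D_l) to the transmitter side (A_lk), so f becomes a sum of decoupled
      per-user utilities  2 sqrt(p) alpha beta Re(mu^H psi) - p psi^H A psi
      minus a constant noise term.  For the pilot psi = phi_s the utility is
      the scalar function gfun c_s b_s of the power, maximised by p_s.
   2. Feasible pilot configurations and feasible assignments x correspond:
      x_s(l,k) = [psi_lk = phi_s] (orthonormality makes phi injective), and
      conversely x selects one pilot per user and distinct pilots in a cell.
   3. Assignments form a finite set, so an optimal one exists; evaluating f
      at the configuration it selects gives its objective, and every
      feasible configuration is bounded by the objective of its own
      assignment, hence by the optimum. *)
From HB Require Import structures.
From mathcomp Require Import all_boot all_order all_algebra.
From mathcomp Require Import ring.
From Stdlib Require Import FunctionalExtensionality.
Set Implicit Arguments. Unset Strict Implicit. Unset Printing Implicit Defensive.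
Import Order.TTheory GRing.Theory Num.Theory Num.Def.
Local Open Scope ring_scope.

Section HermitianForm.
Variables (C : numClosedFieldType) (n : nat).
Implicit Types (u v w : 'cV[C]_n).

Lemma dotHD u v w : dotH u (v + w) = dotH u v + dotH u w.
Proof. by rewrite /dotH -big_split; apply: eq_bigr => i _; rewrite mxE mulrDr. Qed.

Lemma dotH0 u : dotH u 0 = 0.
Proof. by rewrite /dotH big1 // => i _; rewrite mxE mulr0. Qed.

Lemma dotHZ u a v : dotH u (a *: v) = a * dotH u v.
Proof. by rewrite /dotH mulr_sumr; apply: eq_bigr => i _; rewrite mxE mulrCA. Qed.

Lemma dotH_sum u (I : finType) (F : I -> 'cV[C]_n) :
  dotH u (\sum_i F i) = \sum_i dotH u (F i).
Proof. exact: (big_morph (dotH u) (dotHD u) (dotH0 u)). Qed.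

Lemma dotH_outer u v w : dotH u ((v *m adjv v) *m w) = dotH u v * dotH v w.
Proof.
have adjv_mul : adjv v *m w = (dotH v w)%:M.
  apply/matrixP => i j; rewrite !ord1 !mxE /dotH /=.
  by apply: eq_bigr => k _; rewrite !mxE.
by rewrite -mulmxA adjv_mul mul_mx_scalar dotHZ mulrC.
Qed.
End HermitianForm.

Section Objective.
Variables (C : numClosedFieldType) (L K tau : nat).
Variables (sigma2 : C) (alpha : 'I_L -> 'I_K -> C).
Variables (beta : 'I_L -> 'I_L -> 'I_K -> C) (mu : 'I_L -> 'I_K -> 'cV[C]_tau).

Definition utility (q : C) (v : 'cV[C]_tau) (l : 'I_L) (k : 'I_K) : C :=
  2 * sqrtC q * alpha l k * beta l l k * 'Re (dotH (mu l k) v)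
  - q * dotH v (Amat alpha beta mu l k *m v).

Definition noise_term : C :=
  sigma2 * \sum_(l < L) \sum_(k < K) alpha l k * dotH (mu l k) (mu l k).

Definition interference (p : 'I_L -> 'I_K -> C) (psi : 'I_L -> 'I_K -> 'cV[C]_tau)
    (l : 'I_L) (k : 'I_K) : C :=
  \sum_(i < L) \sum_(j < K)
     beta l i j * p i j * (dotH (mu l k) (psi i j) * dotH (psi i j) (mu l k)).

Lemma exchange_big4 (F : 'I_L -> 'I_K -> 'I_L -> 'I_K -> C) :
  \sum_(l < L) \sum_(k < K) \sum_(i < L) \sum_(j < K) F l k i j =
  \sum_(i < L) \sum_(j < K) \sum_(l < L) \sum_(k < K) F l k i j.
Proof.
under eq_bigr do rewrite exchange_big.
rewrite exchange_big; apply: eq_bigr => i _.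
under eq_bigr do rewrite exchange_big.
by rewrite exchange_big.
Qed.

Lemma quad_Dmat p psi l (u : 'cV[C]_tau) :
  dotH u (Dmat sigma2 beta p psi l *m u) =
  sigma2 * dotH u u + \sum_(i < L) \sum_(j < K)
     beta l i j * p i j * (dotH u (psi i j) * dotH (psi i j) u).
Proof.
rewrite /Dmat mulmxDl dotHD mul_scalar_mx dotHZ mulmx_suml dotH_sum.
congr (_ + _); apply: eq_bigr => i _.
rewrite mulmx_suml dotH_sum; apply: eq_bigr => j _.
by rewrite -scalemxAl dotHZ dotH_outer.
Qed.

Lemma quad_Amat l k (u : 'cV[C]_tau) :
  dotH u (Amat alpha beta mu l k *m u) =
  \sum_(i < L) \sum_(j < K)
     alpha i j * beta i l k * (dotH u (mu i j) * dotH (mu i j) u).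
Proof.
rewrite /Amat mulmx_suml dotH_sum; apply: eq_bigr => i _.
rewrite mulmx_suml dotH_sum; apply: eq_bigr => j _.
by rewrite -scalemxAl dotHZ dotH_outer.
Qed.

(* Exchanging the roles of receiver (l,k) and transmitter (i,j): the total
   weighted interference equals the sum of the transmitter-side quadratic
   forms p_ij psi_ij^H A_ij psi_ij. *)
Lemma interference_exchange p psi :
  \sum_(l < L) \sum_(k < K) alpha l k * interference p psi l k =
  \sum_(i < L) \sum_(j < K) p i j * dotH (psi i j) (Amat alpha beta mu i j *m psi i j).
Proof.
have lhsE : \sum_(l < L) \sum_(k < K) alpha l k * interference p psi l k =
  \sum_(l < L) \sum_(k < K) \sum_(i < L) \sum_(j < K) alpha l k * (beta l i j * p i j
     * (dotH (mu l k) (psi i j) * dotH (psi i j) (mu l k))).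
  apply: eq_bigr => l _; apply: eq_bigr => k _.
  by rewrite mulr_sumr; apply: eq_bigr => i _; rewrite mulr_sumr.
rewrite lhsE exchange_big4; apply: eq_bigr => i _; apply: eq_bigr => j _.
rewrite quad_Amat mulr_sumr; apply: eq_bigr => l _; rewrite mulr_sumr.
by apply: eq_bigr => k _; ring.
Qed.

Lemma fobj_decouple p psi :
  fobj sigma2 alpha beta p psi mu =
  \sum_(l < L) \sum_(k < K) utility (p l k) (psi l k) l k - noise_term.
Proof.
pose signal l k := 2 * sqrtC (p l k) * alpha l k * beta l l k * 'Re (dotH (mu l k) (psi l k)).
have sum2B (F G : 'I_L -> 'I_K -> C) :
    \sum_(l < L) \sum_(k < K) (F l k - G l k) =
    \sum_(l < L) \sum_(k < K) F l k - \sum_(l < L) \sum_(k < K) G l k.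
  by rewrite -sumrB; apply: eq_bigr => l _; rewrite sumrB.
have utilityE : \sum_(l < L) \sum_(k < K) utility (p l k) (psi l k) l k =
    \sum_(l < L) \sum_(k < K) signal l k
    - \sum_(l < L) \sum_(k < K) alpha l k * interference p psi l k.
  by rewrite interference_exchange -sum2B.
have noiseE : noise_term =
    \sum_(l < L) \sum_(k < K) sigma2 * (alpha l k * dotH (mu l k) (mu l k)).
  by rewrite /noise_term mulr_sumr; apply: eq_bigr => l _; rewrite mulr_sumr.
rewrite utilityE noiseE -!sum2B /fobj.
apply: eq_bigr => l _; apply: eq_bigr => k _.
by rewrite quad_Dmat /signal /interference; ring.
Qed.
End Objective.

Lemma utility_pilot (C : numClosedFieldType) (L K tau : nat)
    (alpha : 'I_L -> 'I_K -> C) (beta : 'I_L -> 'I_L -> 'I_K -> C)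
    (mu : 'I_L -> 'I_K -> 'cV[C]_tau) (phi : 'I_tau -> 'cV[C]_tau) s l k q :
  utility alpha beta mu q (phi s) l k =
  gfun (cco alpha beta mu phi s l k) (bco alpha beta mu phi s l k) q.
Proof. by rewrite /utility /gfun /cco /bco; ring. Qed.

(* gfun c b vanishes at 0, so its maximum over [0, Pmax] is nonnegative. *)
Lemma gfun0 (C : numClosedFieldType) (c b : C) : gfun c b 0 = 0.
Proof. by rewrite /gfun sqrtC0 mulr0 !mul0r subr0. Qed.

Lemma orthonormal_inj (C : numClosedFieldType) (tau : nat) (phi : 'I_tau -> 'cV[C]_tau) :
  (forall s t, dotH (phi s) (phi t) = if s == t then tau%:R else 0) -> injective phi.
Proof.
move=> hphi s t phi_st; apply/eqP; apply: contraT => /negbTE neq_st.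
have tau_gt0 : (0 < tau)%N by apply: leq_ltn_trans (ltn_ord s).
have := hphi s t; rewrite neq_st -phi_st hphi eqxx => /eqP.
by rewrite pnatr_eq0 => /eqP tau0; rewrite tau0 in tau_gt0.
Qed.

Section Indicators.
Variable I : finType.
Implicit Type f : I -> bool.

Lemma sum_boolE f : (\sum_i f i)%N = #|f|.
Proof.
by rewrite -sum1_card [RHS]big_mkcond; apply: eq_bigr => i _; rewrite unfold_in; case: (f i).
Qed.

Lemma sum_bool_eq1P f : (\sum_i f i)%N = 1%N <-> exists i0, f =1 pred1 i0.
Proof.
rewrite sum_boolE; split => [/eqP/card1P [i0 f_i0] | [i0 f_i0]].
  by exists i0 => i; have := f_i0 i; rewrite !unfold_in.
by apply/eqP/card1P; exists i0 => i; rewrite !unfold_in f_i0.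
Qed.

Lemma sum_bool_le1P f :
  (\sum_i f i <= 1)%N <-> (forall i j, f i -> f j -> i = j).
Proof.
rewrite sum_boolE; split => [/card_le1_eqP f_uniq i j fi fj | f_uniq].
  by apply: f_uniq; rewrite unfold_in.
by apply/card_le1_eqP => i j fi fj; apply: f_uniq; rewrite -unfold_in.
Qed.

Lemma sum_indicator (V : nmodType) f (G : I -> V) i0 :
  f =1 pred1 i0 -> \sum_i G i *+ f i = G i0.
Proof.
move=> f_i0; rewrite (bigD1 i0) // big1 => [|i /negbTE neq_i].
  by rewrite f_i0 /= eqxx addr0.
by rewrite f_i0 /= neq_i.
Qed.
End Indicators.

Section Assignments.
Variables (C : numClosedFieldType) (L K tau : nat).
Local Notation assignment := ('I_tau -> 'I_L -> 'I_K -> bool).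

Lemma assign_select (x : assignment) l k :
  assign_feasible x -> exists s0, (fun s => x s l k) =1 pred1 s0.
Proof. by case=> one_pilot _; apply/sum_bool_eq1P/one_pilot. Qed.

Lemma diagonal_assignment_feasible :
  (K <= tau)%N -> assign_feasible (fun (s : 'I_tau) (l : 'I_L) (k : 'I_K) => val s == val k).
Proof.
move=> hK; split => [l k | l s].
  apply/sum_bool_eq1P; exists (widen_ord hK k) => s /=.
  by rewrite -(inj_eq val_inj).
by apply/sum_bool_le1P => k k' /eqP sk /eqP sk'; apply: val_inj; rewrite -sk -sk'.
Qed.

(* Assignments encoded as a finite table with a boolean feasibility test, so
   that the optimum can be taken over a finite type. *)
Definition assign_table := {ffun 'I_tau * 'I_L * 'I_K -> bool}.

Definition assign_of_table (F : assign_table) : assignment :=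
  fun s l k => F (s, l, k).

Definition table_of_assign (x : assignment) : assign_table :=
  [ffun t => x t.1.1 t.1.2 t.2].

Lemma table_of_assignK (x : assignment) : assign_of_table (table_of_assign x) = x.
Proof.
apply: functional_extensionality => s; apply: functional_extensionality => l.
by apply: functional_extensionality => k; rewrite /assign_of_table ffunE.
Qed.

Definition table_feasible (F : assign_table) : bool :=
  [forall l, forall k, (\sum_(s < tau) F (s, l, k) == 1)%N] &&
  [forall l, forall s, (\sum_(k < K) F (s, l, k) <= 1)%N].

Lemma table_feasibleP F : reflect (assign_feasible (assign_of_table F)) (table_feasible F).
Proof.
apply: (iffP andP) => [[/forallP one_pilot /forallP distinct] | [one_pilot distinct]].
  split=> l t; first exact/eqP/(forallP (one_pilot l) t).
  exact: (forallP (distinct l) t).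
by split; apply/forallP => l; apply/forallP => t; [apply/eqP/one_pilot | apply: distinct].
Qed.

Lemma optimal_assignment_exists (piv : 'I_tau -> 'I_L -> 'I_K -> C) :
  (K <= tau)%N -> (forall s l k, 0 <= piv s l k) ->
  exists x, assign_feasible x /\
    forall y, assign_feasible y -> assign_obj piv y <= assign_obj piv x.
Proof.
move=> hK piv_ge0.
have obj_real F : assign_obj piv (assign_of_table F) \is Num.real.
  apply/ger0_real/sumr_ge0 => l _; apply: sumr_ge0 => k _; apply: sumr_ge0 => s _.
  by rewrite mulr_ge0 ?ler0n.
have diag_feasible : table_feasible (table_of_assign
    (fun (s : 'I_tau) (l : 'I_L) (k : 'I_K) => val s == val k)).
  by apply/table_feasibleP; rewrite table_of_assignK; apply: diagonal_assignment_feasible.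
case: (@real_arg_maxP C _ _ _ (fun F => assign_obj piv (assign_of_table F))
          diag_feasible (fun F _ => obj_real F)) => F /table_feasibleP F_feasible F_max.
exists (assign_of_table F); split => // y y_feasible.
rewrite -(table_of_assignK y); apply: F_max; apply/table_feasibleP.
by rewrite table_of_assignK.
Qed.
End Assignments.

Section PilotConfigurations.
Variables (C : numClosedFieldType) (L K tau : nat).
Variables (sigma2 Pmax : C) (alpha : 'I_L -> 'I_K -> C).
Variables (beta : 'I_L -> 'I_L -> 'I_K -> C) (mu : 'I_L -> 'I_K -> 'cV[C]_tau).
Variables (phi : 'I_tau -> 'cV[C]_tau) (pstar : 'I_tau -> 'I_L -> 'I_K -> C).
Hypothesis phi_inj : injective phi.
Hypothesis pstar_range : forall s l k, 0 <= pstar s l k <= Pmax.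
Hypothesis pstar_max : forall s l k q, 0 <= q <= Pmax ->
  gfun (cco alpha beta mu phi s l k) (bco alpha beta mu phi s l k) q
  <= gfun (cco alpha beta mu phi s l k) (bco alpha beta mu phi s l k) (pstar s l k).
Local Notation assignment := ('I_tau -> 'I_L -> 'I_K -> bool).

Definition profit (s : 'I_tau) (l : 'I_L) (k : 'I_K) : C :=
  gfun (cco alpha beta mu phi s l k) (bco alpha beta mu phi s l k) (pstar s l k).

Definition power_of (x : assignment) (l : 'I_L) (k : 'I_K) : C :=
  \sum_(s < tau) (x s l k)%:R * pstar s l k.

Definition pilot_of (x : assignment) (l : 'I_L) (k : 'I_K) : 'cV[C]_tau :=
  \sum_(s < tau) (x s l k)%:R *: phi s.

Definition assignment_of (psi : 'I_L -> 'I_K -> 'cV[C]_tau) : assignment :=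
  fun s l k => psi l k == phi s.

Lemma profit_ge0 s l k : 0 <= profit s l k.
Proof.
have zero_range : (0 : C) <= 0 <= Pmax.
  by case/andP: (pstar_range s l k) => ge0 leP; rewrite lexx (le_trans ge0 leP).
by have := pstar_max s l k zero_range; rewrite gfun0.
Qed.

Section SelectedPilot.
Variables (x : assignment) (l : 'I_L) (k : 'I_K) (s0 : 'I_tau).
Hypothesis x_s0 : (fun s => x s l k) =1 pred1 s0.

Lemma power_of_select : power_of x l k = pstar s0 l k.
Proof.
rewrite /power_of; under eq_bigr do rewrite mulr_natl.
exact: (sum_indicator (fun s => pstar s l k) x_s0).
Qed.

Lemma pilot_of_select : pilot_of x l k = phi s0.
Proof.
rewrite /pilot_of; under eq_bigr do rewrite scaler_nat.
exact: (sum_indicator phi x_s0).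
Qed.

Lemma profit_select : \sum_(s < tau) profit s l k * (x s l k)%:R = profit s0 l k.
Proof.
under eq_bigr do rewrite mulr_natr.
exact: (sum_indicator (fun s => profit s l k) x_s0).
Qed.
End SelectedPilot.

Lemma configuration_feasible x :
  assign_feasible x -> feasible Pmax phi (power_of x) (pilot_of x).
Proof.
move=> x_feasible; split; [|split] => [l k | l k | l k k' neq_kk'].
- by have [s0 /power_of_select ->] := assign_select l k x_feasible.
- by have [s0 /pilot_of_select ->] := assign_select l k x_feasible; exists s0.
- have [s0 x_s0] := assign_select l k x_feasible.
  have [s1 x_s1] := assign_select l k' x_feasible.
  rewrite (pilot_of_select x_s0) (pilot_of_select x_s1) => /phi_inj eq_s01.
  have /sum_bool_le1P distinct_in_cell := x_feasible.2 l s0.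
  move/negP: neq_kk'; apply; apply/eqP/distinct_in_cell.
    by rewrite x_s0 /=.
  by rewrite x_s1 /= eq_s01.
Qed.

Lemma assignment_of_feasible p psi :
  feasible Pmax phi p psi -> assign_feasible (assignment_of psi).
Proof.
case=> _ [psi_pilot psi_distinct]; split => [l k | l s].
  have [s0 psi_s0] := psi_pilot l k; apply/sum_bool_eq1P; exists s0 => s.
  by rewrite /assignment_of psi_s0 /= (inj_eq phi_inj) eq_sym.
apply/sum_bool_le1P => k k' /eqP psi_k /eqP psi_k'.
by apply/eqP; apply: contraT => /(psi_distinct l); rewrite psi_k psi_k'.
Qed.

Lemma fobj_configuration x :
  assign_feasible x ->
  fobj sigma2 alpha beta (power_of x) (pilot_of x) mu =
  assign_obj profit x - noise_term sigma2 alpha mu.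
Proof.
move=> x_feasible; rewrite fobj_decouple; congr (_ - _).
apply: eq_bigr => l _; apply: eq_bigr => k _.
have [s0 x_s0] := assign_select l k x_feasible.
by rewrite (power_of_select x_s0) (pilot_of_select x_s0) utility_pilot (profit_select x_s0).
Qed.

Lemma fobj_le_assignment p psi :
  feasible Pmax phi p psi ->
  fobj sigma2 alpha beta p psi mu <= assign_obj profit (assignment_of psi) - noise_term sigma2 alpha mu.
Proof.
move=> feasible_p_psi; have [p_range [psi_pilot _]] := feasible_p_psi.
rewrite fobj_decouple lerD2r; apply: ler_sum => l _; apply: ler_sum => k _.
have [s0 psi_s0] := psi_pilot l k.
have x_s0 : (fun s => assignment_of psi s l k) =1 pred1 s0.
  by move=> s; rewrite /assignment_of psi_s0 /= (inj_eq phi_inj) eq_sym.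
by rewrite (profit_select x_s0) psi_s0 utility_pilot; apply/pstar_max/p_range.
Qed.
End PilotConfigurations.

Theorem mainTheorem7 (C : numClosedFieldType) (L K tau : nat)
  (hK : (K <= tau)%N)
  (sigma2 Pmax : C) (hsigma : 0 < sigma2) (hPmax : 0 < Pmax)
  (beta : 'I_L -> 'I_L -> 'I_K -> C) (hbeta : forall l i j, 0 < beta l i j)
  (alpha : 'I_L -> 'I_K -> C) (halpha : forall l k, 0 < alpha l k)
  (phi : 'I_tau -> 'cV[C]_tau)
  (hphi : forall s t, dotH (phi s) (phi t) = if s == t then tau%:R else 0)
  (mu : 'I_L -> 'I_K -> 'cV[C]_tau)
  (pstar : 'I_tau -> 'I_L -> 'I_K -> C)
  (hpstar_range : forall s l k, 0 <= pstar s l k <= Pmax)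
  (hpstar_max : forall s l k q, 0 <= q <= Pmax ->
      gfun (cco alpha beta mu phi s l k) (bco alpha beta mu phi s l k) q
      <= gfun (cco alpha beta mu phi s l k) (bco alpha beta mu phi s l k)
              (pstar s l k)) :
  let piv := fun s l k =>
      gfun (cco alpha beta mu phi s l k) (bco alpha beta mu phi s l k)
           (pstar s l k) in
  let noise := sigma2 * \sum_(l < L) \sum_(k < K) alpha l k * dotH (mu l k) (mu l k) in
  (forall (p : 'I_L -> 'I_K -> C) (psi : 'I_L -> 'I_K -> 'cV[C]_tau),
      fobj sigma2 alpha beta p psi mu =
      \sum_(l < L) \sum_(k < K)
         (2 * sqrtC (p l k) * alpha l k * beta l l k * 'Re (dotH (mu l k) (psi l k))
          - p l k * dotH (psi l k) (Amat alpha beta mu l k *m psi l k))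
      - noise) /\
  (exists x : 'I_tau -> 'I_L -> 'I_K -> bool, assign_feasible x /\
     forall y, assign_feasible y -> assign_obj piv y <= assign_obj piv x) /\
  (forall x, assign_feasible x ->
     (forall y, assign_feasible y -> assign_obj piv y <= assign_obj piv x) ->
     let p0 := fun l k => \sum_(s < tau) (x s l k)%:R * pstar s l k in
     let psi0 := fun l k => \sum_(s < tau) (x s l k)%:R *: phi s in
     feasible Pmax phi p0 psi0 /\
     fobj sigma2 alpha beta p0 psi0 mu = assign_obj piv x - noise /\
     (forall p psi, feasible Pmax phi p psi ->
        fobj sigma2 alpha beta p psi mu <= assign_obj piv x - noise)).
Proof.
move=> piv noise.
have phi_inj := orthonormal_inj hphi.
split; first exact: fobj_decouple.
split; first exact/optimal_assignment_exists/(profit_ge0 hpstar_range hpstar_max).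
move=> x x_feasible x_opt p0 psi0; split; last split.
- exact: configuration_feasible.
- exact: fobj_configuration.
move=> p psi p_psi_feasible.
have y_feasible := assignment_of_feasible phi_inj p_psi_feasible.
rewrite (le_trans (fobj_le_assignment sigma2 phi_inj hpstar_max p_psi_feasible)) //.
by rewrite lerD2r; apply: x_opt.
Qed.
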